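(* Consider MDVI$(\alpha,K,M)$ with any $\alpha\in[0,1)$ and positive integers $K,M$ on an MDP as in the context. Then, for every realization of the samples and every $k\in\{1,\dots,K\}$, $\|v_{k-1}\|_\infty\le H$.
   Context: MDP: finite state set $\mathcal{X}$, finite action set $\mathcal{A}$, discount $\gamma\in[0,1)$, reward $r\in[-1,1]^{\mathcal{X}\times\mathcal{A}}$, transition kernel $P(y|x,a)$, $H=1/(1-\gamma)$. MDVI$(\alpha,K,M)$: $s_0 = 0$, $w_0=w_{-1}=0$; for $k=0,\dots,K-1$: $v_k = w_k-\alpha w_{k-1}$; for each $(x,a)$, independent samples $y_{k,m,x,a}\sim P(\cdot|x,a)$, $m\in[M]$; $q_{k+1}(x,a) = r(x,a)+\frac{\gamma}{M}\sum_m v_k(y_{k,m,x,a})$; $s_{k+1}=q_{k+1}+\alpha s_k$; $w_{k+1}(x)=\max_a s_{k+1}(x,a)$. *)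

From mathcomp Require Import all_boot all_order all_algebra.
Set Implicit Arguments. Unset Strict Implicit. Unset Printing Implicit Defensive.
Import Order.TTheory GRing.Theory Num.Theory.
Local Open Scope ring_scope.

Section MDVI.
Variables (R : realFieldType) (X A : finType) (a0 : A).

Definition supnorm (v : X -> R) : R := \big[Num.max/0]_(x : X) `|v x|.

(* a (stochastic) transition kernel P(y|x,a) = P x a y *)
Definition is_kernel (P : X -> A -> X -> R) : Prop :=
  forall x a, (forall y, 0 <= P x a y) /\ \sum_(y : X) P x a y = 1.

(* MDVI(alpha, K, M) run on a fixed realization of the samples:
   samp k m x a = y_{k,m,x,a}.  The state after k iterations is
   (s_k, w_k, w_{k-1}); a0 is only the seed of the max over the
   (nonempty) action set, the max itself does not depend on it. *)
Fixpoint mdvi_state (gamma alpha : R) (r : X -> A -> R) (M : nat)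
  (samp : nat -> 'I_M -> X -> A -> X) (k : nat)
  : (X -> A -> R) * (X -> R) * (X -> R) :=
  match k with
  | 0 => (fun _ _ => 0, fun _ => 0, fun _ => 0)
  | k'.+1 =>
      let: (s, w, wp) := mdvi_state gamma alpha r samp k' in
      let v := fun y => w y - alpha * wp y in
      let q := fun x a =>
        r x a + gamma / M%:R * \sum_(m < M) v (samp k' m x a) in
      let s' := fun x a => q x a + alpha * s x a in
      (s', fun x => \big[Num.max/s' x a0]_(a : A) s' x a, w)
  end.

Definition mdvi_v gamma alpha r M samp k : X -> R :=
  let: (_, w, wp) := @mdvi_state gamma alpha r M samp k in
  fun x => w x - alpha * wp x.

End MDVI.

(* Since [alpha >= 0], [alpha w_k(x) = max_a alpha s_k(x,a)], hence
   [v_{k+1}(x) = max_a (q_{k+1}(x,a) + alpha s_k(x,a)) - max_a alpha s_k(x,a)],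
   and a maximum moves by at most the sup-norm of the perturbation, so
   [|v_{k+1}| <= max |q_{k+1}| <= 1 + gamma max |v_k|].  The bound
   [H = 1 / (1 - gamma)] is the fixed point of [t |-> 1 + gamma t], so
   [|v_k| <= H] follows by induction from [v_0 = 0], whatever the samples. *)
From mathcomp Require Import all_boot all_order all_algebra.
From mathcomp Require Import ring lra.
Import Order.TTheory GRing.Theory Num.Theory.
Local Open Scope ring_scope.

Section BigmaxPerturbation.
Variable R : realDomainType.

Lemma ler_dist_max (x1 x2 y1 y2 e : R) :
  `|x1 - x2| <= e -> `|y1 - y2| <= e -> `|Num.max x1 y1 - Num.max x2 y2| <= e.
Proof.
rewrite !ler_norml => /andP[? ?] /andP[? ?].
by rewrite !maxEle; case: (leP x1 y1); case: (leP x2 y2) => ? ?; apply/andP; split; lra.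
Qed.

Lemma ler_dist_bigmax (I : Type) (s : seq I) (P : pred I) (F G : I -> R) (x0 y0 e : R) :
  `|x0 - y0| <= e -> (forall i, P i -> `|F i - G i| <= e) ->
  `|\big[Num.max/x0]_(i <- s | P i) F i - \big[Num.max/y0]_(i <- s | P i) G i| <= e.
Proof.
by move=> ? ?; apply: (big_ind2 (fun x y => `|x - y| <= e)) => // *; apply: ler_dist_max.
Qed.

Lemma bigmax_pMr (I : Type) (s : seq I) (P : pred I) (F : I -> R) (x0 c : R) :
  0 <= c ->
  c * \big[Num.max/x0]_(i <- s | P i) F i = \big[Num.max/c * x0]_(i <- s | P i) (c * F i).
Proof. by move=> c0; apply: (big_morph ( *%R c)) => // x y; rewrite maxr_pMr. Qed.

End BigmaxPerturbation.

Lemma ler_norm_mean (R : numFieldType) (n : nat) (F : 'I_n -> R) (c : R) :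
  (0 < n)%N -> (forall i, `|F i| <= c) -> `|n%:R^-1 * \sum_(i < n) F i| <= c.
Proof.
move=> n_gt0 Fc; rewrite normrM ger0_norm ?invr_ge0 ?ler0n //.
apply: (le_trans (ler_wpM2l _ (ler_norm_sum _ _ _))); first by rewrite invr_ge0 ler0n.
apply: (le_trans (ler_wpM2l _ (ler_sum _ (fun i _ => Fc i)))); first by rewrite invr_ge0 ler0n.
by rewrite sumr_const card_ord -[c *+ n]mulr_natl mulKf // pnatr_eq0 -lt0n.
Qed.

Section MDVIBound.
Variables (R : realFieldType) (X A : finType) (a0 : A) (gamma alpha : R).
Variables (r : X -> A -> R) (M : nat) (samp : nat -> 'I_M -> X -> A -> X).

Local Notation state := (mdvi_state a0 gamma alpha r samp).
Local Notation v := (mdvi_v a0 gamma alpha r samp).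
Local Notation s k := (state k).1.1.

(* [mdvi_q k] is the paper's [q_{k+1}], built from the samples of round [k]. *)
Definition mdvi_q (k : nat) (x : X) (a : A) : R :=
  r x a + gamma / M%:R * \sum_(m < M) v k (samp k m x a).

Lemma mdvi_w_bigmax k x : (state k).1.2 x = \big[Num.max/s k x a0]_(a : A) s k x a.
Proof.
case: k => [|k] /=; first by elim/big_rec: _ => // a y _ ->; rewrite maxxx.
by case: (state k) => [[? ?] ?].
Qed.

Lemma mdvi_vS k x :
  v k.+1 x = \big[Num.max/mdvi_q k x a0 + alpha * s k x a0]_(a : A)
               (mdvi_q k x a + alpha * s k x a)
             - alpha * \big[Num.max/s k x a0]_(a : A) s k x a.
Proof.
rewrite -mdvi_w_bigmax /mdvi_q /mdvi_v /=.
by case: (state k) => [[? ?] ?].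
Qed.

Hypotheses (gamma_ge0 : 0 <= gamma) (gamma_lt1 : gamma < 1) (alpha_ge0 : 0 <= alpha).
Hypotheses (r_le1 : forall x a, `|r x a| <= 1) (M_gt0 : (0 < M)%N).

Local Notation H := (1 - gamma)^-1.

Lemma mdvi_q_bounded k :
  (forall y, `|v k y| <= H) -> forall x a, `|mdvi_q k x a| <= H.
Proof.
move=> vk x a.
have -> : H = 1 + gamma * H by field; rewrite subr_eq0 eq_sym lt_eqF.
apply: (le_trans (ler_normD _ _)); apply: lerD => //.
by rewrite -mulrA normrM ger0_norm // ler_wpM2l //; apply: ler_norm_mean.
Qed.

Lemma mdvi_v_bounded k x : `|v k x| <= H.
Proof.
elim: k x => [|k IH] x.
  by rewrite /mdvi_v /= mulr0 subr0 normr0 invr_ge0 subr_ge0 ltW.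
rewrite mdvi_vS bigmax_pMr //.
by apply: ler_dist_bigmax => [|a _]; rewrite addrK; apply: mdvi_q_bounded.
Qed.

End MDVIBound.

Theorem lemma24 (R : realFieldType) (X A : finType) (a0 : A)
  (gamma : R) (P : X -> A -> X -> R) (r : X -> A -> R)
  (alpha : R) (K M : nat) :
  0 <= gamma < 1 ->
  is_kernel P ->
  (forall x a, -1 <= r x a <= 1) ->
  0 <= alpha < 1 ->
  (0 < K)%N -> (0 < M)%N ->
  forall samp : nat -> 'I_M -> X -> A -> X,
  forall k : nat, (1 <= k <= K)%N ->
    supnorm (mdvi_v a0 gamma alpha r samp k.-1) <= (1 - gamma)^-1.
Proof.
move=> /andP[gamma_ge0 gamma_lt1] _ r_bounded /andP[alpha_ge0 _] _ M_gt0 samp k _.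
apply: bigmax_le => [|x _]; first by rewrite invr_ge0 subr_ge0 ltW.
by apply: mdvi_v_bounded => // x' a; rewrite ler_norml r_bounded.
Qed.
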